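(* Let $f\colon W\to U$ be a fibrant map between path connected spaces, with basepoints $\dagger\in W$, $*\in U$ and biset $B(f,\dagger,* )$. Let $U'\subseteq U$ be path connected with basepoint $*'$, let $\{W'_z\}_{z\in I}$ be the path connected components of $f^{-1}(U')$, with basepoints $\dagger'_z\in W'_z$, and let $B(f|_{W'_z},\dagger'_z,*')$ be the biset of $f|_{W'_z}\colon W'_z\to U'$. Let $()^-\colon B(f|_{W'_z},\dagger'_z,*')\to B(f,\dagger,* )$ be the congruences given by choices of paths $\gamma_z$ in $W$ from $\dagger$ to $\dagger'_z$ and $\gamma_*$ in $U$ from $*$ to $*'$: loops $\delta$ at $\dagger'_z$ map to $\gamma_z\delta\gamma_z^{-1}$, loops $\delta$ at $*'$ map to $\gamma_*\delta\gamma_*^{-1}$, and $b\mapsto f(\gamma_z)\,b\,\gamma_*^{-1}$. Then \[\bigsqcup_{z\in I}\pi_1(W,\dagger)\otimes_{\pi_1(W'_z,\dagger'_z)}B(f|_{W'_z},\dagger'_z,*')\longrightarrow B(f,\dagger,* ),\qquad g\otimes b\mapsto g\,b^-,\] is an isomorphism of $\pi_1(W,\dagger)$-$\pi_1(U',*')$-bisets, where $\pi_1(U',*')$ acts on $B(f,\dagger,* )$ via $()^-\colon\pi_1(U',*')\to\pi_1(U,* )$ and $\pi_1(W'_z,\dagger'_z)$ acts on $\pi_1(W,\dagger)$ via $()^-$.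
   Context: For a continuous map $f\colon Y\to X$ and basepoints $\dagger\in Y$, $*\in X$, $B(f,\dagger,* )$ is the set of homotopy classes rel endpoints of paths in $X$ from $f(\dagger)$ to $*$, a $\pi_1(Y,\dagger)$-$\pi_1(X,* )$-biset via $[\lambda]\cdot[\gamma]=[f\circ\lambda\#\gamma]$ and $[\gamma]\cdot[\mu]=[\gamma\#\mu]$. A map is fibrant if it has the homotopy lifting property with respect to all spaces. The product $A\otimes_K C$ of a right $K$-set and a left $K$-set is $A\times C$ modulo $(ak,c)=(a,kc)$. *)

From HB Require Import structures.
From mathcomp Require Import all_boot all_order all_algebra.
From mathcomp Require Import all_classical all_reals topology.
From mathcomp Require Import Rstruct Rstruct_topology.
From Stdlib Require Import Relations.
From Stdlib Require Import Rdefinitions.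
Import Order.TTheory GRing.Theory Num.Theory.

Set Implicit Arguments.
Unset Strict Implicit.
Unset Printing Implicit Defensive.

Local Open Scope classical_set_scope.
Local Open Scope ring_scope.

Definition I01 : set R := [set s : R | 0 <= s <= 1].
Definition I01sq : set (R * R) := [set p | I01 p.1 /\ I01 p.2].

Definition path_in (X : topologicalType) (A : set X) (p : R -> X) (a b : X) :=
  [/\ {within I01, continuous p}, (forall s, I01 s -> A (p s)), p 0 = a & p 1 = b].

Definition pconn (X : topologicalType) (A : set X) (a b : X) :=
  exists p : R -> X, path_in A p a b.

Definition path_connected (X : topologicalType) (A : set X) :=
  forall a b, A a -> A b -> pconn A a b.

Definition phtpy (X : topologicalType) (A : set X) (p q : R -> X) :=
  exists H : R * R -> X,
    [/\ {within I01sq, continuous H},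
        (forall s t, I01 s -> I01 t -> A (H (s, t))),
        (forall s, I01 s -> H (s, 0) = p s /\ H (s, 1) = q s) &
        (forall t, I01 t -> H (0, t) = p 0 /\ H (1, t) = p 1)].

Definition pcat (X : Type) (p q : R -> X) : R -> X :=
  fun s => if s <= 1 / 2 then p (2 * s) else q (2 * s - 1).
Definition invpath (X : Type) (p : R -> X) : R -> X := fun s => p (1 - s).



Definition fibrant (W U : topologicalType) (f : W -> U) :=
  forall (Y : topologicalType) (h : Y -> W) (H : Y * R -> U),
    continuous h ->
    {within [set p : Y * R | I01 p.2], continuous H} ->
    (forall y, H (y, 0) = f (h y)) ->
    exists L : Y * R -> W,
      [/\ {within [set p : Y * R | I01 p.2], continuous L},
          (forall y, L (y, 0) = h y) &
          (forall p : Y * R, I01 p.2 -> f (L p) = H p)].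

Section Tensor.
Variables (W U : topologicalType) (f : W -> U) (I : Type).
Variables (dag : W) (U' : set U) (star' : U) (bp : I -> W) (gam : I -> R -> W).

Definition Wcomp (z : I) : set W := [set w | pconn (f @^-1` U') (bp z) w].

(* representatives (z, g, b) of elements of
   pi_1(W,dag) (x)_{pi_1(W'_z, bp z)} B(f|W'_z, bp z, star') *)
Definition tvalid (t : I * ((R -> W) * (R -> U))) :=
  path_in setT t.2.1 dag dag /\ path_in U' t.2.2 (f (bp t.1)) star'.

Definition conjW (z : I) (d : R -> W) : R -> W := pcat (pcat (gam z) d) (invpath (gam z)).

(* generating relations of the tensor product: change of representatives
   within homotopy classes, and (g k, c) = (g, k c) *)
Definition tensor_gen (t t' : I * ((R -> W) * (R -> U))) :=
  tvalid t /\ tvalid t' /\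
  ((t.1 = t'.1 /\ phtpy setT t.2.1 t'.2.1 /\ phtpy U' t.2.2 t'.2.2) \/
   exists (z : I) (g : R -> W) (b : R -> U) (d : R -> W),
     [/\ path_in (Wcomp z) d (bp z) (bp z),
         t = (z, (pcat g (conjW z d), b)) &
         t' = (z, (g, pcat (f \o d) b))]).

Definition tensor_eq := clos_refl_sym_trans _ tensor_gen.

End Tensor.

(* The map sends g (x) b to f(g) f(gamma_z) b gamma_*^-1.  Well-definedness and
   equivariance are identities in the fundamental groupoid, proved from the
   groupoid laws for concatenation of paths (all obtained by reparametrising
   inside the convex unit square).  For surjectivity, a path p from f(dag) to
   * followed by gamma_* lifts, f being fibrant, to a path ending over *' and
   hence in some component W'_z, which yields a representative.  For
   injectivity, lift the U'-parts b, b' of two representatives with homotopic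
   images to bt, bt'; lifting the null-homotopy of the resulting loop of U
   across the square produces a path m in the fibre over *' from the end of
   bt' to the end of bt.  Hence both ends lie in the same component, so the
   indices agree, and the representatives differ by the loop bt' m bt^-1 of
   W'_z, which is exactly a generating relation of the tensor product. *)

From HB Require Import structures.
From mathcomp Require Import all_boot all_order all_algebra.
From mathcomp Require Import all_classical all_reals topology normedtype.
From mathcomp Require Import Rstruct Rstruct_topology lra.
From Stdlib Require Import Rdefinitions Relations.
Import Order.TTheory GRing.Theory Num.Theory.
Import numFieldNormedType.Exports.
Local Open Scope classical_set_scope.
Local Open Scope ring_scope.
Set Implicit Arguments.
Unset Strict Implicit.

Section ContinuousWithin.
Variable T : topologicalType.
Implicit Type A : set T.

Lemma continuous_within_comp (Y Z : topologicalType) A (B : set Y)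
    (h : T -> Y) (g : Y -> Z) :
  {within A, continuous h} -> {within B, continuous g} ->
  (forall x, A x -> B (h x)) -> {within A, continuous (g \o h)}.
Proof.
move=> ch cg hAB; apply/continuousP => O oO.
have /open_subspaceP [V oV VB] := (continuousP _).1 cg O oO.
have /open_subspaceP [V' oV' VA] := (continuousP _).1 ch V oV.
apply/open_subspaceP; exists V' => //; rewrite VA.
apply/seteqP; split => x [Vx Ax]; split => //.
  have : (V `&` B) (h x) by split => //; exact: hAB.
  by rewrite VB => -[].
have : ((from_subspace B g) @^-1` O `&` B) (h x) by split => //; exact: hAB.
by rewrite -VB => -[].
Qed.

Lemma continuous_within_ext (Z : topologicalType) A (f g : T -> Z) :
  (forall x, A x -> f x = g x) ->
  {within A, continuous f} -> {within A, continuous g}.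
Proof. by move=> fg; apply: subspace_eq_continuous => x /set_mem /fg. Qed.

Lemma continuous_within_cst (Z : topologicalType) A (c : Z) :
  {within A, continuous (fun=> c)}.
Proof. exact: cst_continuous. Qed.

Lemma continuous_within_pair (Y Z : topologicalType) A (f : T -> Y) (g : T -> Z) :
  {within A, continuous f} -> {within A, continuous g} ->
  {within A, continuous (fun x => (f x, g x))}.
Proof. by move=> cf cg x; apply: cvg_pair; [exact: cf | exact: cg]. Qed.

Lemma continuous_withinD A (f g : T -> R) :
  {within A, continuous f} -> {within A, continuous g} ->
  {within A, continuous (fun x => f x + g x)}.
Proof. by move=> cf cg x; exact: (@continuousD _ R^o _ _ _ x (cf x) (cg x)). Qed.

Lemma continuous_withinM A (f g : T -> R) :
  {within A, continuous f} -> {within A, continuous g} ->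
  {within A, continuous (fun x => f x * g x)}.
Proof. by move=> cf cg x; exact: (continuousM (cf x) (cg x)). Qed.

Lemma continuous_within_affine A (f : T -> R) (a b : R) :
  {within A, continuous f} -> {within A, continuous (fun x => a + b * f x)}.
Proof.
move=> cf; apply: continuous_withinD; first exact: continuous_within_cst.
by apply: continuous_withinM => //; exact: continuous_within_cst.
Qed.

Lemma continuous_within_subl A (f : T -> R) (a : R) :
  {within A, continuous f} -> {within A, continuous (fun x => a - f x)}.
Proof.
move=> cf; apply: continuous_withinD; first exact: continuous_within_cst.
by move=> x; exact: (@continuousN _ R^o _ _ x (cf x)).
Qed.

End ContinuousWithin.

Lemma continuous_within_id (T : topologicalType) (A : set T) :
  {within A, continuous id}.
Proof. by apply: continuous_subspaceT => x; exact: cvg_id. Qed.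

Lemma continuous_within_fst (T U : topologicalType) (A : set (T * U)) :
  {within A, continuous (fun u => u.1)}.
Proof. by apply: continuous_subspaceT => x; exact: cvg_fst. Qed.

Lemma continuous_within_snd (T U : topologicalType) (A : set (T * U)) :
  {within A, continuous (fun u => u.2)}.
Proof. by apply: continuous_subspaceT => x; exact: cvg_snd. Qed.

Lemma I01_0 : I01 0. Proof. by rewrite /I01 /= lexx ler01. Qed.
Lemma I01_1 : I01 1. Proof. by rewrite /I01 /= lexx ler01. Qed.

Lemma closed_itvcc (a b : R) : closed [set s : R | a <= s <= b].
Proof.
have -> : [set s : R | a <= s <= b] = [set s | a <= s] `&` [set s | s <= b].
  by apply/seteqP; split => s /=; [move/andP | move=> [-> ->]].
by apply: closedI; [exact: closed_ge | exact: closed_le].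
Qed.

Lemma closed_box (a b c d : R) :
  closed [set u : R * R | a <= u.1 <= b /\ c <= u.2 <= d].
Proof.
have cfst : continuous (fun u : R * R => u.1) by move=> x; exact: cvg_fst.
have csnd : continuous (fun u : R * R => u.2) by move=> x; exact: cvg_snd.
have -> : [set u : R * R | a <= u.1 <= b /\ c <= u.2 <= d] =
  (fun u : R * R => u.1) @^-1` [set s | a <= s <= b] `&`
  (fun u : R * R => u.2) @^-1` [set s | c <= s <= d] by [].
apply: closedI.
  by move/continuous_closedP: cfst; apply; exact: closed_itvcc.
by move/continuous_closedP: csnd; apply; exact: closed_itvcc.
Qed.

Lemma continuous_within_I01_halves (X : topologicalType) (F : R -> X) :
  {within [set s | 0 <= s <= 1/2], continuous F} ->
  {within [set s | 1/2 <= s <= 1], continuous F} ->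
  {within I01, continuous F}.
Proof.
move=> c1 c2.
have -> : I01 = [set s | 0 <= s <= 1/2] `|` [set s | 1/2 <= s <= 1].
  apply/seteqP; split => s /=.
    move=> /andP [h0 h1]; case: (lerP s (1/2)) => h.
      by left; apply/andP.
    by right; apply/andP; split => //; apply: ltW.
  by move=> [] /andP [h0 h1]; apply/andP; split; lra.
by apply: withinU_continuous => //; exact: closed_itvcc.
Qed.

Lemma continuous_within_square_halves1 (X : topologicalType) (F : R * R -> X) :
  {within [set u | 0 <= u.1 <= 1/2 /\ 0 <= u.2 <= 1], continuous F} ->
  {within [set u | 1/2 <= u.1 <= 1 /\ 0 <= u.2 <= 1], continuous F} ->
  {within I01sq, continuous F}.
Proof.
move=> c1 c2.
have -> : I01sq = [set u | 0 <= u.1 <= 1/2 /\ 0 <= u.2 <= 1] `|`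
                  [set u | 1/2 <= u.1 <= 1 /\ 0 <= u.2 <= 1].
  apply/seteqP; split => u /=.
    move=> [/andP [h0 h1] h2]; case: (lerP u.1 (1/2)) => h.
      by left; split => //; apply/andP.
    by right; split => //; apply/andP; split => //; apply: ltW.
  by move=> [] [/andP [h0 h1] h2]; split => //; apply/andP; split; lra.
by apply: withinU_continuous => //; exact: closed_box.
Qed.

Lemma continuous_within_square_halves2 (X : topologicalType) (F : R * R -> X) :
  {within [set u | 0 <= u.1 <= 1 /\ 0 <= u.2 <= 1/2], continuous F} ->
  {within [set u | 0 <= u.1 <= 1 /\ 1/2 <= u.2 <= 1], continuous F} ->
  {within I01sq, continuous F}.
Proof.
move=> c1 c2.
have -> : I01sq = [set u | 0 <= u.1 <= 1 /\ 0 <= u.2 <= 1/2] `|`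
                  [set u | 0 <= u.1 <= 1 /\ 1/2 <= u.2 <= 1].
  apply/seteqP; split => u /=.
    move=> [h2 /andP [h0 h1]]; case: (lerP u.2 (1/2)) => h.
      by left; split => //; apply/andP.
    by right; split => //; apply/andP; split => //; apply: ltW.
  by move=> [] [h2 /andP [h0 h1]]; split => //; apply/andP; split; lra.
by apply: withinU_continuous => //; exact: closed_box.
Qed.

Section PathAlgebra.
Variable X : topologicalType.
Implicit Types (A B : set X) (p q : R -> X) (a b c : X).

(* The casts make [0] and [1] ring numerals: [pcat]'s argument is in [R_scope]. *)
Lemma pcat0 p q : (pcat p q : R -> X) 0 = p 0.
Proof. by rewrite /pcat ifT ?mulr0 //; lra. Qed.

Lemma pcat1 p q : (pcat p q : R -> X) 1 = q 1.
Proof. by rewrite /pcat ifF; [congr q; lra | apply/negbTE; rewrite -ltNge; lra]. Qed.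

Lemma pcat_eq_in p p' q q' :
  (forall s, I01 s -> p s = p' s) -> (forall s, I01 s -> q s = q' s) ->
  forall s, I01 s -> pcat p q s = pcat p' q' s.
Proof.
move=> pp' qq' s /andP [s0 s1]; rewrite /pcat; case: lerP => h.
  by apply: pp'; apply/andP; split; lra.
by apply: qq'; apply/andP; split; lra.
Qed.

Lemma continuous_within_pcat p q :
  {within I01, continuous p} -> {within I01, continuous q} -> p 1 = q 0 ->
  {within I01, continuous (pcat p q)}.
Proof.
move=> cp cq pq; apply: continuous_within_I01_halves.
  apply: (@continuous_within_ext _ _ _ (p \o (fun s => 0 + 2 * s))).
    by move=> s /andP [_ s1]; rewrite /pcat /= s1 add0r.
  apply: (continuous_within_comp _ cp).
    exact/continuous_within_affine/continuous_within_id.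
  by move=> s /andP [? ?]; apply/andP; split; lra.
apply: (@continuous_within_ext _ _ _ (q \o (fun s => -1 + 2 * s))).
  move=> s /andP [s0 s1]; rewrite /pcat; case: ifP => h.
    have -> : s = 1/2 by apply/eqP; rewrite eq_le h s0.
    by rewrite /= (_ : 2 * (1 / 2) = 1); [rewrite pq; congr q | ]; lra.
  by congr q; lra.
apply: (continuous_within_comp _ cq).
  exact/continuous_within_affine/continuous_within_id.
by move=> s /andP [? ?]; apply/andP; split; lra.
Qed.

Lemma path_cst A a : A a -> path_in A (fun=> a) a a.
Proof. by split => //; exact: continuous_within_cst. Qed.

Lemma path_pcat A p q a b c :
  path_in A p a b -> path_in A q b c -> path_in A (pcat p q) a c.
Proof.
move=> [cp Ap p0 p1] [cq Aq q0 q1]; split; rewrite ?pcat0 ?pcat1 //.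
  by apply: continuous_within_pcat => //; rewrite p1 q0.
move=> s /andP [s0 s1]; rewrite /pcat; case: lerP => h.
  by apply: Ap; apply/andP; split; lra.
by apply: Aq; apply/andP; split; lra.
Qed.

Lemma path_inv A p a b : path_in A p a b -> path_in A (invpath p) b a.
Proof.
move=> [cp Ap p0 p1]; split; rewrite /invpath ?subr0 ?subrr //.
- apply: (@continuous_within_ext _ _ _ (p \o (fun s => 1 + (-1) * s))).
    by move=> s _ /=; congr p; lra.
  apply: (continuous_within_comp _ cp).
    exact/continuous_within_affine/continuous_within_id.
  by move=> s /andP [? ?]; apply/andP; split; lra.
- by move=> s /andP [? ?]; apply: Ap; apply/andP; split; lra.
Qed.

Lemma path_subset A B p a b : A `<=` B -> path_in A p a b -> path_in B p a b.
Proof. by move=> AB [cp Ap p0 p1]; split => // s /Ap /AB. Qed.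

Lemma path_in_setT A p a b : path_in A p a b -> path_in setT p a b.
Proof. exact: path_subset. Qed.

Lemma path_restrict A B p a b :
  path_in A p a b -> (forall s, I01 s -> B (p s)) -> path_in B p a b.
Proof. by move=> [cp _ p0 p1] Bp; split. Qed.

Lemma pconn_path_point A p a b s : path_in A p a b -> I01 s -> pconn A a (p s).
Proof.
move=> [cp Ap p0 p1] /andP [s0 s1]; exists (fun u => p (0 + s * u)); split.
- apply: (continuous_within_comp _ cp).
    exact/continuous_within_affine/continuous_within_id.
  by move=> u /andP [? ?]; apply/andP; split; nra.
- by move=> u /andP [? ?]; apply: Ap; apply/andP; split; nra.
- by rewrite mulr0 add0r.
- by rewrite mulr1 add0r.
Qed.

End PathAlgebra.

Lemma path_within_map (X Y : topologicalType) (A : set X) (B : set Y) (g : X -> Y)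
    p a b :
  path_in A p a b -> {within A, continuous g} -> (forall x, A x -> B (g x)) ->
  path_in B (g \o p) (g a) (g b).
Proof.
move=> [cp Ap p0 p1] cg AB; split; rewrite /= ?p0 ?p1 //.
- exact: continuous_within_comp cp cg Ap.
- by move=> s hs; apply/AB/Ap.
Qed.

Lemma path_map (X Y : topologicalType) (A : set X) (B : set Y) (g : X -> Y) p a b :
  continuous g -> (forall x, A x -> B (g x)) -> path_in A p a b ->
  path_in B (g \o p) (g a) (g b).
Proof. by move=> cg AB hp; apply: path_within_map hp _ AB; exact: continuous_subspaceT. Qed.

Lemma comp_pcat (X Y : Type) (g : X -> Y) (p q : R -> X) :
  g \o pcat p q = pcat (g \o p) (g \o q).
Proof. by apply/funext => s; rewrite /pcat /=; case: ifP. Qed.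

Lemma comp_invpath (X Y : Type) (g : X -> Y) (p : R -> X) :
  g \o invpath p = invpath (g \o p).
Proof. by []. Qed.

Section Homotopy.
Variable X : topologicalType.
Implicit Types (A B : set X) (p q r : R -> X) (a b : X).

Lemma phtpy_endpoints A p q : phtpy A p q -> q 0 = p 0 /\ q 1 = p 1.
Proof.
move=> [H [_ _ bH eH]]; have [_ <-] := bH 0 I01_0; have [_ <-] := bH 1 I01_1.
by have [-> ->] := eH 1 I01_1.
Qed.

Lemma phtpy_eq_inl A p q r :
  phtpy A q r -> (forall s, I01 s -> p s = q s) -> phtpy A p r.
Proof.
move=> [H [cH AH bH eH]] pq; exists H; split => //.
- by move=> s hs; rewrite pq //; exact: bH.
- by move=> t ht; rewrite !pq; [exact: eH | exact: I01_1 | exact: I01_0].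
Qed.

Lemma phtpy_eq_inr A p q r :
  phtpy A p q -> (forall s, I01 s -> q s = r s) -> phtpy A p r.
Proof.
move=> [H [cH AH bH eH]] qr; exists H; split => //.
by move=> s hs; rewrite -qr //; exact: bH.
Qed.

Lemma phtpy_refl A p a b : path_in A p a b -> phtpy A p p.
Proof.
move=> [cp Ap _ _]; exists (fun u => p u.1); split => //.
- apply: (@continuous_within_comp _ _ _ _ I01 (fun u => u.1) p) => //.
    exact: continuous_within_fst.
  by move=> u [].
- by move=> s t hs _; exact: Ap.
Qed.

Lemma phtpy_eq_in A p q a b :
  path_in A p a b -> (forall s, I01 s -> p s = q s) -> phtpy A p q.
Proof. by move=> hp; apply: phtpy_eq_inr (phtpy_refl hp). Qed.

Lemma phtpy_sym A p q : phtpy A p q -> phtpy A q p.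
Proof.
move=> [H [cH AH bH eH]]; exists (fun u => H (u.1, 1 - u.2)); split.
- apply: (@continuous_within_comp _ _ _ _ I01sq (fun u : R * R => (u.1, 1 - u.2)) H) => //.
    apply: continuous_within_pair; first exact: continuous_within_fst.
    exact/continuous_within_subl/continuous_within_snd.
  by move=> u [hs /andP [? ?]]; split => //=; apply/andP; split; lra.
- by move=> s t hs /andP [? ?] /=; apply: AH => //; apply/andP; split; lra.
- by move=> s hs; rewrite subr0 subrr; have [-> ->] := bH s hs.
- move=> t /andP [t0 t1]; have /eH [-> ->] : I01 (1 - t) by apply/andP; split; lra.
  have [_ <-] := bH 0 I01_0; have [_ <-] := bH 1 I01_1.
  by have [-> ->] := eH 1 I01_1.
Qed.

Lemma phtpy_trans A p q r : phtpy A p q -> phtpy A q r -> phtpy A p r.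
Proof.
move=> [H1 [cH1 AH1 bH1 eH1]] [H2 [cH2 AH2 bH2 eH2]].
exists (fun u => if u.2 <= 1/2 then H1 (u.1, 2 * u.2) else H2 (u.1, 2 * u.2 - 1)).
have [q0 q1] := phtpy_endpoints (ex_intro _ H1 (And4 cH1 AH1 bH1 eH1)).
split.
- apply: continuous_within_square_halves2.
    apply: (@continuous_within_ext _ _ _ (H1 \o (fun u : R * R => (u.1, 0 + 2 * u.2)))).
      by move=> u /= [_ /andP [_ ->]]; rewrite add0r.
    apply: (@continuous_within_comp _ _ _ _ I01sq) => //.
      apply: continuous_within_pair; first exact: continuous_within_fst.
      exact/continuous_within_affine/continuous_within_snd.
    by move=> u /= [/andP [? ?] /andP [? ?]]; split; apply/andP; split => /=; lra.
  apply: (@continuous_within_ext _ _ _ (H2 \o (fun u : R * R => (u.1, -1 + 2 * u.2)))).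
    move=> u /= [hu /andP [h0 h1]]; case: lerP => h; last by congr H2; congr pair; lra.
    have -> : u.2 = 1/2 by apply/eqP; rewrite eq_le h h0.
    rewrite (_ : 2 * (1 / 2) = 1); last lra.
    rewrite (_ : -1 + 1 = 0); last lra.
    by have [_ ->] := bH1 _ hu; have [-> _] := bH2 _ hu.
  apply: (@continuous_within_comp _ _ _ _ I01sq) => //.
    apply: continuous_within_pair; first exact: continuous_within_fst.
    exact/continuous_within_affine/continuous_within_snd.
  by move=> u /= [/andP [? ?] /andP [? ?]]; split; apply/andP; split => /=; lra.
- move=> s t hs /andP [t0 t1] /=.
  by case: lerP => h; [apply: AH1 | apply: AH2] => //; apply/andP; split; lra.
- move=> s hs /=; split.
    by rewrite ifT ?mulr0; [exact: (bH1 s hs).1 | lra].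
  rewrite ifF; last by apply/negbTE; rewrite -ltNge; lra.
  by rewrite (_ : 2 * 1 - 1 = 1); [exact: (bH2 s hs).2 | lra].
- move=> t /andP [t0 t1] /=; case: lerP => h.
    by apply: eH1; apply/andP; split; lra.
  by rewrite -q0 -q1; apply: eH2; apply/andP; split; lra.
Qed.
Lemma phtpy_pcat A p p' q q' :
  phtpy A p p' -> phtpy A q q' -> p 1 = q 0 -> phtpy A (pcat p q) (pcat p' q').
Proof.
move=> [H1 [cH1 AH1 bH1 eH1]] [H2 [cH2 AH2 bH2 eH2]] pq.
exists (fun u => if u.1 <= 1/2 then H1 (2 * u.1, u.2) else H2 (2 * u.1 - 1, u.2)).
split.
- apply: continuous_within_square_halves1.
    apply: (@continuous_within_ext _ _ _ (H1 \o (fun u : R * R => (0 + 2 * u.1, u.2)))).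
      by move=> u /= [/andP [_ ->] _]; rewrite add0r.
    apply: (@continuous_within_comp _ _ _ _ I01sq) => //.
      apply: continuous_within_pair; last exact: continuous_within_snd.
      exact/continuous_within_affine/continuous_within_fst.
    by move=> u /= [/andP [? ?] /andP [? ?]]; split; apply/andP; split => /=; lra.
  apply: (@continuous_within_ext _ _ _ (H2 \o (fun u : R * R => (-1 + 2 * u.1, u.2)))).
    move=> u /= [/andP [h0 h1] hu]; case: lerP => h; last by congr H2; congr pair; lra.
    have -> : u.1 = 1/2 by apply/eqP; rewrite eq_le h h0.
    rewrite (_ : 2 * (1 / 2) = 1); last lra.
    rewrite (_ : -1 + 1 = 0); last lra.
    by have [_ ->] := eH1 _ hu; have [-> _] := eH2 _ hu.
  apply: (@continuous_within_comp _ _ _ _ I01sq) => //.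
    apply: continuous_within_pair; last exact: continuous_within_snd.
    exact/continuous_within_affine/continuous_within_fst.
  by move=> u /= [/andP [? ?] /andP [? ?]]; split; apply/andP; split => /=; lra.
- move=> s t /andP [s0 s1] ht /=.
  by case: lerP => h; [apply: AH1 | apply: AH2] => //; apply/andP; split; lra.
- move=> s /andP [s0 s1]; rewrite /pcat /=.
  by case: lerP => h; [apply: bH1 | apply: bH2]; apply/andP; split; lra.
- move=> t ht /=; rewrite pcat0 pcat1; split.
    by rewrite ifT ?mulr0; [exact: (eH1 t ht).1 | lra].
  rewrite ifF; last by apply/negbTE; rewrite -ltNge; lra.
  by rewrite (_ : 2 * 1 - 1 = 1); [exact: (eH2 t ht).2 | lra].
Qed.

Lemma phtpy_inv A p q : phtpy A p q -> phtpy A (invpath p) (invpath q).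
Proof.
move=> [H [cH AH bH eH]]; exists (fun u => H (1 - u.1, u.2)); split.
- apply: (@continuous_within_comp _ _ _ _ I01sq (fun u : R * R => (1 - u.1, u.2)) H) => //.
    apply: continuous_within_pair; last exact: continuous_within_snd.
    exact/continuous_within_subl/continuous_within_fst.
  by move=> u [/andP [? ?] ht]; split => //=; apply/andP; split; lra.
- by move=> s t /andP [? ?] ht /=; apply: AH => //; apply/andP; split; lra.
- move=> s /andP [s0 s1]; rewrite /invpath /=; apply: bH.
  by have : 0 <= 1 - s <= 1 by apply/andP; split; lra.
- by move=> t ht; rewrite /invpath subr0 subrr; have [-> ->] := eH t ht.
Qed.

Lemma phtpy_subset A B p q : A `<=` B -> phtpy A p q -> phtpy B p q.
Proof. by move=> AB [H [cH AH bH eH]]; exists H; split => // s t hs ht; apply/AB/AH. Qed.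

End Homotopy.

Lemma phtpy_map (X Y : topologicalType) (A : set X) (B : set Y) (g : X -> Y) p q :
  continuous g -> (forall x, A x -> B (g x)) -> phtpy A p q ->
  phtpy B (g \o p) (g \o q).
Proof.
move=> cg AB [H [cH AH bH eH]]; exists (g \o H); split.
- apply: (@continuous_within_comp _ _ _ _ setT _ g cH) => //.
  exact: continuous_subspaceT.
- by move=> s t hs ht; apply/AB/AH.
- by move=> s hs /=; have [-> ->] := bH s hs.
- by move=> t ht /=; have [-> ->] := eH t ht.
Qed.

Lemma continuous_within_square_coords (g : R -> R * R) :
  {within I01, continuous g} ->
  {within I01sq, continuous (fun u => (g u.1).1)} /\
  {within I01sq, continuous (fun u => (g u.1).2)}.
Proof.
move=> cg.
have cg1 : {within I01sq, continuous (g \o (fun u => u.1))}.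
  apply: (@continuous_within_comp _ _ _ _ I01) => //; last by move=> u [].
  exact: continuous_within_fst.
split.
  exact (continuous_within_comp cg1 (@continuous_within_fst _ _ setT) (fun _ _ => I)).
exact (continuous_within_comp cg1 (@continuous_within_snd _ _ setT) (fun _ _ => I)).
Qed.

Section Reparametrization.
Variables (X : topologicalType) (A : set X).

(* The square is convex, so the straight-line homotopy between [g1] and [g2]
   stays inside it. *)
Lemma phtpy_square_paths (L : R * R -> X) (g1 g2 : R -> R * R) :
  {within I01sq, continuous L} -> (forall u, I01sq u -> A (L u)) ->
  {within I01, continuous g1} -> {within I01, continuous g2} ->
  (forall s, I01 s -> I01sq (g1 s)) -> (forall s, I01 s -> I01sq (g2 s)) ->
  g1 0 = g2 0 -> g1 1 = g2 1 -> phtpy A (L \o g1) (L \o g2).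
Proof.
move=> cL AL c1 c2 sq1 sq2 e0 e1.
pose mix u := ((1 - u.2) * (g1 u.1).1 + u.2 * (g2 u.1).1,
               (1 - u.2) * (g1 u.1).2 + u.2 * (g2 u.1).2).
have mix_sq u : I01sq u -> I01sq (mix u).
  case: u => s t [/= hs /andP [t0 t1]].
  have [/andP [? ?] /andP [? ?]] := sq1 s hs.
  have [/andP [? ?] /andP [? ?]] := sq2 s hs.
  by rewrite /mix; split; apply/andP; split => /=; nra.
exists (L \o mix); split.
- apply: (continuous_within_comp _ cL mix_sq).
  have [c11 c12] := continuous_within_square_coords c1.
  have [c21 c22] := continuous_within_square_coords c2.
  have ct : {within I01sq, continuous (fun u : R * R => 1 - u.2)}.
    exact/continuous_within_subl/continuous_within_snd.
  by apply: continuous_within_pair; apply: continuous_withinD;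
    apply: continuous_withinM => //; exact: continuous_within_snd.
- by move=> s t hs ht; apply/AL/mix_sq.
- move=> s hs; rewrite /mix /= subr0 subrr !mul1r !mul0r !addr0 !add0r.
  by rewrite -!surjective_pairing.
- move=> t ht; rewrite /mix /= -e0 -e1 -!mulrDl subrK !mul1r.
  by rewrite -!surjective_pairing.
Qed.

Lemma phtpy_reparam p a b (h1 h2 : R -> R) c d :
  path_in A p a b -> path_in I01 h1 c d -> path_in I01 h2 c d ->
  phtpy A (p \o h1) (p \o h2).
Proof.
move=> [cp Ap _ _] [ch1 Ih1 h10 h11] [ch2 Ih2 h20 h21].
apply: (@phtpy_square_paths (fun u => p u.1) (fun s => (h1 s, 0)) (fun s => (h2 s, 0))).
- apply: (@continuous_within_comp _ _ _ _ I01) => //; last by move=> u [].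
  exact: continuous_within_fst.
- by move=> u [hu _]; exact: Ap.
- by apply: continuous_within_pair => //; exact: continuous_within_cst.
- by apply: continuous_within_pair => //; exact: continuous_within_cst.
- by move=> s hs; split; [exact: Ih1 | exact: I01_0].
- by move=> s hs; split; [exact: Ih2 | exact: I01_0].
- by rewrite h10 h20.
- by rewrite h11 h21.
Qed.

End Reparametrization.

Lemma path_in_I01_affine (a c : R) : I01 a -> I01 c ->
  path_in I01 (fun u => a + (c - a) * u) a c.
Proof.
move=> /andP [a0 a1] /andP [c0 c1]; split.
- exact/continuous_within_affine/continuous_within_id.
- by move=> u /andP [u0 u1]; apply/andP; split; nra.
- by rewrite mulr0 addr0.
- by rewrite mulr1 addrC subrK.
Qed.

Lemma path_in_I01_id : path_in I01 id 0 1.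
Proof. by split => //; exact: continuous_within_id. Qed.

Ltac pcat_cases := rewrite /pcat /invpath /=; repeat match goal with
  |- context [if (?x <= ?y) then _ else _] =>
     lazymatch x with context [if _ then _ else _] => fail | _ =>
     lazymatch y with context [if _ then _ else _] => fail | _ =>
     case: (lerP x y) => ? /=; try (exfalso; lra) end end end.

Section Groupoid.
Variables (X : topologicalType) (A : set X).
Implicit Types (p q r : R -> X) (a b c d : X).

Lemma phtpy_pcatA p q r a b c d :
  path_in A p a b -> path_in A q b c -> path_in A r c d ->
  phtpy A (pcat (pcat p q) r) (pcat p (pcat q r)).
Proof.
move=> hp hq hr.
pose phi := pcat (fun u => 0 + (1/4 - 0) * u)
  (pcat (fun u => 1/4 + (1/2 - 1/4) * u) (fun u => 1/2 + (1 - 1/2) * u)).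
have I01_14 : I01 (1/4) by apply/andP; split; lra.
have I01_12 : I01 (1/2) by apply/andP; split; lra.
have hphi : path_in I01 phi 0 1.
  apply: path_pcat; first exact: path_in_I01_affine I01_0 I01_14.
  apply: path_pcat; first exact: path_in_I01_affine I01_14 I01_12.
  exact: path_in_I01_affine I01_12 I01_1.
apply: phtpy_eq_inr (phtpy_reparam (path_pcat (path_pcat hp hq) hr)
  path_in_I01_id hphi) _.
by move=> s /andP [s0 s1]; rewrite /phi; pcat_cases; congr (_ _); lra.
Qed.

Lemma phtpy_pcat1p p a b : path_in A p a b -> phtpy A (pcat (fun=> a) p) p.
Proof.
move=> hp.
have h := phtpy_reparam hp (path_pcat (path_cst I01_0) path_in_I01_id) path_in_I01_id.
by apply: (phtpy_eq_inl h) => s /andP [s0 s1]; pcat_cases; [case: hp | congr p; lra].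
Qed.

Lemma phtpy_pcatp1 p a b : path_in A p a b -> phtpy A (pcat p (fun=> b)) p.
Proof.
move=> hp.
have h := phtpy_reparam hp (path_pcat path_in_I01_id (path_cst I01_1)) path_in_I01_id.
by apply: (phtpy_eq_inl h) => s /andP [s0 s1]; pcat_cases; [congr p; lra | case: hp].
Qed.

Lemma phtpy_pcatpV p a b : path_in A p a b -> phtpy A (pcat p (invpath p)) (fun=> a).
Proof.
move=> hp; have h := phtpy_reparam hp (path_pcat path_in_I01_id (path_inv path_in_I01_id))
  (path_cst I01_0).
apply: (phtpy_eq_inr (phtpy_eq_inl h _)) => s /andP [s0 s1]; pcat_cases;
  by [case: hp | congr p; lra].
Qed.

Lemma phtpy_pcatVp p a b : path_in A p a b -> phtpy A (pcat (invpath p) p) (fun=> b).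
Proof.
move=> hp; have h := phtpy_reparam hp (path_pcat (path_inv path_in_I01_id) path_in_I01_id)
  (path_cst I01_1).
apply: (phtpy_eq_inr (phtpy_eq_inl h _)) => s /andP [s0 s1]; pcat_cases;
  by [case: hp | congr p; lra].
Qed.

Lemma phtpy_pcatl p q q' a b c :
  path_in A p a b -> path_in A q b c -> phtpy A q q' -> phtpy A (pcat p q) (pcat p q').
Proof.
move=> hp hq qq'; apply: (phtpy_pcat (phtpy_refl hp) qq').
by case: hp => _ _ _ ->; case: hq => _ _ -> _.
Qed.

Lemma phtpy_pcatr p p' q a b c :
  path_in A p a b -> path_in A q b c -> phtpy A p p' -> phtpy A (pcat p q) (pcat p' q).
Proof.
move=> hp hq pp'; apply: (phtpy_pcat pp' (phtpy_refl hq)).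
by case: hp => _ _ _ ->; case: hq => _ _ -> _.
Qed.

End Groupoid.

Lemma path_in_square_bottom : path_in I01sq (fun s => (s, 0)) (0, 0) (1, 0).
Proof.
split => //; last by move=> s hs; split => //; exact: I01_0.
apply: continuous_within_pair; first exact: continuous_within_id.
exact: continuous_within_cst.
Qed.

Lemma path_in_square_top : path_in I01sq (fun s => (s, 1)) (0, 1) (1, 1).
Proof.
split => //; last by move=> s hs; split => //; exact: I01_1.
apply: continuous_within_pair; first exact: continuous_within_id.
exact: continuous_within_cst.
Qed.

Lemma path_in_square_left : path_in I01sq (fun t => (0, t)) (0, 0) (0, 1).
Proof.
split => //; last by move=> s hs; split => //; exact: I01_0.
apply: continuous_within_pair; first exact: continuous_within_cst.
exact: continuous_within_id.
Qed.

Lemma path_in_square_right : path_in I01sq (fun t => (1, t)) (1, 0) (1, 1).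
Proof.
split => //; last by move=> s hs; split => //; exact: I01_1.
apply: continuous_within_pair; first exact: continuous_within_cst.
exact: continuous_within_id.
Qed.

Lemma phtpy_square_boundary (X : topologicalType) (A : set X) (L : R * R -> X) :
  {within I01sq, continuous L} -> (forall u, I01sq u -> A (L u)) ->
  phtpy A (fun s => L (s, 0))
    (pcat (pcat (fun t => L (0, t)) (fun s => L (s, 1))) (invpath (fun t => L (1, t)))).
Proof.
move=> cL AL.
have bot := path_within_map path_in_square_bottom cL AL.
have rgt := path_within_map path_in_square_right cL AL.
have corner : phtpy A (L \o pcat (fun s => (s, 0)) (fun t => (1, t)))
                      (L \o pcat (fun t => (0, t)) (fun s => (s, 1))).
  case: (path_pcat path_in_square_bottom path_in_square_right) => c1 i1 e10 e11.
  case: (path_pcat path_in_square_left path_in_square_top) => c2 i2 e20 e21.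
  by apply: phtpy_square_paths => //; rewrite ?e10 ?e20 ?e11 ?e21.
rewrite !comp_pcat in corner.
apply: phtpy_trans (phtpy_pcatr (path_pcat bot rgt) (path_inv rgt) corner).
apply: phtpy_sym; apply: phtpy_trans (phtpy_pcatA bot rgt (path_inv rgt)) _.
apply: phtpy_trans (phtpy_pcatl bot (path_pcat rgt (path_inv rgt)) (phtpy_pcatpV rgt)) _.
exact: phtpy_pcatp1 bot.
Qed.

Section PathWords.
Variables (X : topologicalType) (A : set X).
Implicit Types (p q r g c d b e s m : R -> X).
Local Notation "p ~ q" := (phtpy A p q) (at level 70).
Local Notation "p @@ q" := (pcat p q) (at level 40, left associativity).

Lemma phtpy_pcat_cancel p q r x0 x1 x2 x3 :
  path_in A p x0 x2 -> path_in A q x1 x2 -> path_in A r x2 x3 ->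
  (p @@ invpath q) @@ (q @@ r) ~ p @@ r.
Proof.
move=> hp hq hr; have hq' := path_inv hq.
apply: phtpy_trans (phtpy_pcatA hp hq' (path_pcat hq hr)) _.
apply: phtpy_pcatl hp (path_pcat hq' (path_pcat hq hr)) _.
apply: phtpy_trans (phtpy_sym (phtpy_pcatA hq' hq hr)) _.
apply: phtpy_trans (phtpy_pcatr (path_pcat hq' hq) hr (phtpy_pcatVp hq)) _.
exact: phtpy_pcat1p hr.
Qed.

Lemma phtpy_pcatK p q x0 x1 x2 :
  path_in A p x0 x1 -> path_in A q x1 x2 -> (p @@ q) @@ invpath q ~ p.
Proof.
move=> hp hq; have hq' := path_inv hq.
apply: phtpy_trans (phtpy_pcatA hp hq hq') _.
apply: phtpy_trans (phtpy_pcatl hp (path_pcat hq hq') (phtpy_pcatpV hq)) _.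
exact: phtpy_pcatp1 hp.
Qed.

Lemma phtpy_pcatKV p q x0 x1 x2 :
  path_in A p x0 x2 -> path_in A q x1 x2 -> (p @@ invpath q) @@ q ~ p.
Proof.
move=> hp hq; have hq' := path_inv hq.
apply: phtpy_trans (phtpy_pcatA hp hq' hq) _.
apply: phtpy_trans (phtpy_pcatl hp (path_pcat hq' hq) (phtpy_pcatVp hq)) _.
exact: phtpy_pcatp1 hp.
Qed.

Lemma phtpy_pcatIr p q s x0 x1 x2 :
  path_in A p x0 x2 -> path_in A q x0 x2 -> path_in A s x1 x2 ->
  p @@ invpath s ~ q @@ invpath s -> p ~ q.
Proof.
move=> hp hq hs pq.
apply: phtpy_trans (phtpy_sym (phtpy_pcatKV hp hs)) _.
apply: phtpy_trans (phtpy_pcatr (path_pcat hp (path_inv hs)) hs pq) _.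
exact: phtpy_pcatKV hq hs.
Qed.

Lemma phtpy_pcatV_cst p q x0 x1 :
  path_in A p x0 x1 -> path_in A q x0 x1 -> p ~ q -> invpath q @@ p ~ (fun=> x1).
Proof.
move=> hp hq pq; apply: phtpy_trans (phtpy_pcatl (path_inv hq) hp pq) _.
exact: phtpy_pcatVp hq.
Qed.

Lemma phtpy_pcatV_move p q m x0 x1 x2 :
  path_in A p x0 x1 -> path_in A q x0 x2 -> path_in A m x2 x1 ->
  invpath q @@ p ~ m -> p ~ q @@ m.
Proof.
move=> hp hq hm qp; have hq' := path_inv hq.
have Ax0 : A x0 by case: hp => _ Ap <- _; apply: Ap; exact: I01_0.
apply: phtpy_trans (phtpy_sym (phtpy_pcat1p hp)) _.
apply: phtpy_trans (phtpy_pcatr (path_cst Ax0) hp (phtpy_sym (phtpy_pcatpV hq))) _.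
apply: phtpy_trans (phtpy_pcatA hq hq' hp) _.
exact: phtpy_pcatl hq (path_pcat hq' hp) qp.
Qed.

Lemma phtpy_pcat_conj_move g c d b s x0 x1 x2 x3 x4 :
  path_in A g x0 x1 -> path_in A c x1 x2 -> path_in A d x2 x2 ->
  path_in A b x2 x3 -> path_in A s x3 x4 ->
  (g @@ ((c @@ d) @@ invpath c)) @@ ((c @@ b) @@ s) ~ g @@ ((c @@ (d @@ b)) @@ s).
Proof.
move=> hg hc hd hb hs.
have hcd := path_pcat hc hd; have hcdc := path_pcat hcd (path_inv hc).
have hcbs := path_pcat (path_pcat hc hb) hs.
apply: phtpy_trans (phtpy_pcatA hg hcdc hcbs) _.
apply: phtpy_pcatl hg (path_pcat hcdc hcbs) _.
apply: phtpy_trans (phtpy_pcatl hcdc hcbs (phtpy_pcatA hc hb hs)) _.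
apply: phtpy_trans (phtpy_pcat_cancel hcd hc (path_pcat hb hs)) _.
apply: phtpy_trans (phtpy_pcatA hc hd (path_pcat hb hs)) _.
apply: phtpy_trans (phtpy_pcatl hc (path_pcat hd (path_pcat hb hs))
  (phtpy_sym (phtpy_pcatA hd hb hs))) _.
exact: phtpy_sym (phtpy_pcatA hc (path_pcat hd hb) hs).
Qed.

Lemma phtpy_pcat_telescope l e g s x0 x1 x2 x3 x4 :
  path_in A l x0 x1 -> path_in A e x2 x1 -> path_in A g x3 x2 -> path_in A s x4 x1 ->
  ((l @@ invpath e) @@ invpath g) @@ ((g @@ e) @@ invpath s) ~ l @@ invpath s.
Proof.
move=> hl he hg hs; have hs' := path_inv hs; have hle := path_pcat hl (path_inv he).
apply: phtpy_trans (phtpy_pcatl (path_pcat hle (path_inv hg))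
  (path_pcat (path_pcat hg he) hs') (phtpy_pcatA hg he hs')) _.
apply: phtpy_trans (phtpy_pcat_cancel hle hg (path_pcat he hs')) _.
exact: phtpy_pcat_cancel hl he hs'.
Qed.

Lemma phtpy_pcat_conjr g c b e s x0 x1 x2 x3 x4 :
  path_in A g x0 x1 -> path_in A c x1 x2 -> path_in A b x2 x3 ->
  path_in A e x3 x3 -> path_in A s x4 x3 ->
  g @@ ((c @@ (b @@ e)) @@ invpath s) ~
  (g @@ ((c @@ b) @@ invpath s)) @@ ((s @@ e) @@ invpath s).
Proof.
move=> hg hc hb he hs; have hs' := path_inv hs.
have hcb := path_pcat hc hb; have hcbs := path_pcat hcb hs'.
have hses := path_pcat (path_pcat hs he) hs'.
apply: phtpy_sym; apply: phtpy_trans (phtpy_pcatA hg hcbs hses) _.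
apply: phtpy_pcatl hg (path_pcat hcbs hses) _.
apply: phtpy_trans (phtpy_pcatl hcbs hses (phtpy_pcatA hs he hs')) _.
apply: phtpy_trans (phtpy_pcat_cancel hcb hs (path_pcat he hs')) _.
apply: phtpy_trans (phtpy_sym (phtpy_pcatA hcb he hs')) _.
exact: phtpy_pcatr (path_pcat hcb he) hs' (phtpy_pcatA hc hb he).
Qed.

Lemma phtpy_pcat_solve_conj g c bt g' bt' m x0 x1 x2 x3 :
  path_in A g x0 x0 -> path_in A c x0 x1 -> path_in A bt x1 x2 ->
  path_in A g' x0 x0 -> path_in A bt' x1 x3 -> path_in A m x3 x2 ->
  (g @@ c) @@ bt ~ ((g' @@ c) @@ bt') @@ m ->
  g ~ g' @@ ((c @@ ((bt' @@ m) @@ invpath bt)) @@ invpath c).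
Proof.
move=> hg hc hb hg' hb' hm h.
have hgc := path_pcat hg hc; have hg'c := path_pcat hg' hc.
have hbi := path_inv hb; have hci := path_inv hc; have hbm := path_pcat hb' hm.
apply: phtpy_trans (phtpy_sym (phtpy_pcatK hg hc)) _.
apply: phtpy_trans (phtpy_pcatr hgc hci (phtpy_sym (phtpy_pcatK hgc hb))) _.
have reassoc : (((g' @@ c) @@ bt') @@ m) @@ invpath bt ~
               g' @@ (c @@ ((bt' @@ m) @@ invpath bt)).
  have e1 : ((g' @@ c) @@ bt') @@ m ~ g' @@ (c @@ (bt' @@ m)).
    apply: phtpy_trans (phtpy_pcatA hg'c hb' hm) _.
    exact: phtpy_pcatA hg' hc hbm.
  apply: phtpy_trans (phtpy_pcatr (path_pcat (path_pcat hg'c hb') hm) hbi e1) _.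
  apply: phtpy_trans (phtpy_pcatA hg' (path_pcat hc hbm) hbi) _.
  exact: phtpy_pcatl hg' (path_pcat (path_pcat hc hbm) hbi) (phtpy_pcatA hc hbm hbi).
apply: phtpy_trans (phtpy_pcatr (path_pcat (path_pcat hgc hb) hbi) hci
  (phtpy_trans (phtpy_pcatr (path_pcat hgc hb) hbi h) reassoc)) _.
exact: phtpy_pcatA hg' (path_pcat hc (path_pcat hbm hbi)) hci.
Qed.

Lemma phtpy_pcat_replace p1 p2 p3 q r x0 x1 :
  path_in A p1 x0 x1 -> path_in A p2 x1 x1 -> path_in A p3 x0 x1 ->
  path_in A q x0 x1 -> path_in A r x0 x1 ->
  p1 ~ q -> p2 ~ (fun=> x1) -> p3 ~ r -> ((p1 @@ p2) @@ invpath p3) @@ r ~ q.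
Proof.
move=> h1 h2 h3 hq hr e1 e2 e3.
have Ax1 : A x1 by case: hq => _ Aq _ <-; apply: Aq; exact: I01_1.
have hqc := path_pcat hq (path_cst Ax1); have h12 := path_pcat h1 h2.
have h3i := path_inv h3.
have s1 : p1 @@ p2 ~ q @@ (fun=> x1).
  exact: phtpy_trans (phtpy_pcatr h1 h2 e1) (phtpy_pcatl hq h2 e2).
have s2 : (p1 @@ p2) @@ invpath p3 ~ (q @@ (fun=> x1)) @@ invpath r.
  exact: phtpy_trans (phtpy_pcatr h12 h3i s1) (phtpy_pcatl hqc h3i (phtpy_inv e3)).
apply: phtpy_trans (phtpy_pcatr (path_pcat h12 h3i) hr s2) _.
apply: phtpy_trans (phtpy_pcatKV hqc hr) _.
exact: phtpy_pcatp1 hq.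
Qed.

End PathWords.

Definition clamp01 (y : R) : R := Num.max 0 (Num.min 1 y).

Lemma continuous_clamp01 : continuous clamp01.
Proof.
move=> x; apply: (@continuous_max R R (fun=> 0) (fun y => Num.min 1 y)).
  exact: cst_continuous.
by apply: (@continuous_min R R (fun=> 1) id); [exact: cst_continuous | exact: cvg_id].
Qed.

Lemma clamp01_I01 y : I01 (clamp01 y).
Proof. by apply/andP; rewrite le_max lexx ge_max ler01 ge_min lexx. Qed.

Lemma clamp01_id y : I01 y -> clamp01 y = y.
Proof. by move=> /andP [y0 y1]; rewrite /clamp01 (min_idPr y1) (max_idPr y0). Qed.

Section Fibration.
Variables (W U : topologicalType) (f : W -> U).
Hypothesis f_fib : fibrant f.

Lemma fibrant_lift_path (B : set U) c w0 u : path_in B c (f w0) u ->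
  exists lam w, [/\ path_in (f @^-1` B) lam w0 w, f w = u &
                    forall s, I01 s -> f (lam s) = c s].
Proof.
move=> [cc Bc c0 c1].
have [|y|L [cL L0 fL]] := @f_fib R (fun=> w0) (fun v => c v.2) (@cst_continuous R W w0).
- apply: (@continuous_within_comp _ _ _ _ I01) => //; first exact: continuous_within_snd.
- by rewrite /= c0.
exists (fun s => L (0, s)), (L (0, 1)); split; first split => //.
- have c0s : {within I01, continuous (fun s : R => (0 : R, s))}.
    apply: continuous_within_pair; first exact: continuous_within_cst.
    exact: continuous_within_id.
  exact (continuous_within_comp c0s cL (fun s (hs : I01 s) => hs)).
- by move=> s hs /=; rewrite fL //; exact: Bc.
- by rewrite fL //; exact: I01_1.
- by move=> s hs; exact: fL.
Qed.

(* The homotopy lifting property asks for a map continuous on all of [R], so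
   the initial path is first extended by [clamp01]. *)
Lemma fibrant_lift_square (G : R * R -> U) rho a b :
  {within I01sq, continuous G} -> path_in setT rho a b ->
  (forall s, I01 s -> f (rho s) = G (s, 0)) ->
  exists L : R * R -> W, [/\ {within I01sq, continuous L},
     (forall s, I01 s -> L (s, 0) = rho s) &
     (forall u, I01sq u -> f (L u) = G u)].
Proof.
move=> cG [cr _ _ _] fr.
have crho : continuous (rho \o clamp01).
  apply/continuous_subspace_setT/(@continuous_within_comp _ _ _ _ I01) => //.
    exact: continuous_subspaceT continuous_clamp01.
  by move=> y _; exact: clamp01_I01.
have [||L [cL L0 fL]] := @f_fib R (rho \o clamp01) (fun v => G (clamp01 v.1, v.2)) crho.
- apply: (@continuous_within_comp _ _ _ _ I01sq (fun v => (clamp01 v.1, v.2)) G) => //.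
    apply: continuous_within_pair; last exact: continuous_within_snd.
    apply: continuous_subspaceT => x.
    by apply: continuous_comp; [exact: cvg_fst | exact: continuous_clamp01].
  by move=> v hv; split => //; exact: clamp01_I01.
- by move=> y /=; rewrite fr //; exact: clamp01_I01.
exists L; split.
- by apply: continuous_subspaceW cL => u [].
- by move=> s hs; rewrite L0 /= clamp01_id.
- by move=> [s t] [hs ht]; rewrite fL //= clamp01_id.
Qed.

Lemma fibrant_path_in_fibre rho a b (l : R -> U) y0 :
  path_in setT rho a b -> (forall s, I01 s -> f (rho s) = l s) ->
  phtpy setT l (fun=> y0) -> l 0 = y0 -> l 1 = y0 ->
  exists m, path_in [set w | f w = y0] m a b /\ phtpy setT rho m.
Proof.
move=> hr fr [G [cG _ bG eG]] l0 l1.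
have [L [cL L0 fL]] :=
  fibrant_lift_square cG hr (fun s hs => etrans (fr s hs) (esym (bG s hs).1)).
have AL : forall u, I01sq u -> setT (L u) by [].
have edge_fibre (e : R -> R * R) c0 c1 : path_in I01sq e c0 c1 ->
    (forall s, I01 s -> G (e s) = y0) ->
    path_in [set w | f w = y0] (L \o e) (L c0) (L c1).
  move=> he Ge; apply: path_restrict (path_within_map he cL AL) _ => s hs /=.
  by rewrite fL ?Ge //; case: he => _ /(_ s hs).
have F1 := edge_fibre _ _ _ path_in_square_left (fun t ht => etrans (eG t ht).1 l0).
have F2 := edge_fibre _ _ _ path_in_square_top (fun t ht => (bG t ht).2).
have F3 := edge_fibre _ _ _ path_in_square_right (fun t ht => etrans (eG t ht).2 l1).
have La : L (0, 0) = a by rewrite L0; [case: hr | exact: I01_0].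
have Lb : L (1, 0) = b by rewrite L0; [case: hr | exact: I01_1].
have := path_pcat (path_pcat F1 F2) (path_inv F3); rewrite La Lb => hm.
eexists; split; first exact: hm.
by apply: phtpy_eq_inl (phtpy_square_boundary cL AL) _ => s hs; rewrite L0.
Qed.

Hypothesis f_cont : continuous f.

Lemma path_in_f (B : set W) p a b : path_in B p a b -> path_in setT (f \o p) (f a) (f b).
Proof. by apply: path_map => //; exact: path_in_setT. Qed.

Lemma path_in_f_preimage (B : set U) p a b :
  path_in (f @^-1` B) p a b -> path_in B (f \o p) (f a) (f b).
Proof. exact: path_map. Qed.

Lemma fibrant_phtpy_lift rho rho' a b b' :
  path_in setT rho a b -> path_in setT rho' a b' ->
  phtpy setT (f \o rho) (f \o rho') ->
  exists m, path_in [set w | f w = f b] m b' b /\ phtpy setT rho (pcat rho' m).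
Proof.
move=> hr hr' h.
have fr := path_in_f hr.
have fb' : f b' = f b.
  by have [_] := phtpy_endpoints h; case: hr => _ _ _ <-; case: hr' => _ _ _ <-.
have fr' := path_in_f hr'; rewrite fb' in fr'.
have lcst := phtpy_pcatV_cst fr fr' h.
have [|||m [hm rm]] := fibrant_path_in_fibre (path_pcat (path_inv hr') hr) _ lcst.
- by move=> s _; rewrite -[f _]/((f \o _) s) comp_pcat.
- by rewrite pcat0 /invpath subr0 /=; case: hr' => _ _ _ ->.
- by rewrite pcat1 /=; case: hr => _ _ _ ->.
exists m; split => //; apply: phtpy_pcatV_move hr hr' _ rm.
exact: path_in_setT hm.
Qed.

End Fibration.

Lemma clos_rst_equiv_in (T : Type) (P : T -> Prop) (gen E : relation T) :
  (forall x y, gen x y -> E x y) -> (forall x, P x -> E x x) ->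
  (forall x y, E x y -> E y x) -> (forall x y z, E x y -> E y z -> E x z) ->
  forall x y, P x -> clos_refl_sym_trans T gen x y -> E x y.
Proof.
move=> genE Erefl Esym Etrans x y Px xy.
suff : x = y \/ E x y by case=> [<-|]; [exact: Erefl|].
elim: xy {Px} => {x y} [x y /genE|x|x y _ [->|/Esym]|x y z _ [->|xy] _ [<-|yz]];
  by [left | right | right; exact: Etrans xy yz].
Qed.

Section TensorMap.
Variables (W U : topologicalType) (f : W -> U).
Hypotheses (f_cont : continuous f) (f_fib : fibrant f).
Variables (dag : W) (star : U) (U' : set U) (star' : U) (I : Type) (bp : I -> W).
Hypothesis bp_comp : forall w, (f @^-1` U') w -> exists! z, pconn (f @^-1` U') (bp z) w.
Variable gam : I -> R -> W.
Hypothesis gam_path : forall z, path_in setT (gam z) dag (bp z).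
Variable gstar : R -> U.
Hypothesis gstar_path : path_in setT gstar star star'.
Hypothesis star'_in : U' star'.

Local Notation valid := (tvalid f dag U' star' bp).
Local Notation teq := (tensor_eq f dag U' star' bp gam).

Definition tensor_map (t : I * ((R -> W) * (R -> U))) : R -> U :=
  pcat (f \o t.2.1) (pcat (pcat (f \o gam t.1) t.2.2) (invpath gstar)).

Lemma path_in_fgam z : path_in setT (f \o gam z) (f dag) (f (bp z)).
Proof. exact (path_in_f f_cont (gam_path z)). Qed.

Lemma path_in_tensor_map_tail z b : path_in U' b (f (bp z)) star' ->
  path_in setT (pcat (pcat (f \o gam z) b) (invpath gstar)) (f dag) star.
Proof.
move=> hb; apply: path_pcat (path_inv gstar_path).
exact: path_pcat (path_in_fgam z) (path_in_setT hb).
Qed.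

Lemma path_in_tensor_map t : valid t -> path_in setT (tensor_map t) (f dag) star.
Proof.
case: t => z [g b] [/= hg hb].
exact: path_pcat (path_in_f f_cont hg) (path_in_tensor_map_tail hb).
Qed.

Lemma tensor_gen_phtpy t t' :
  tensor_gen f dag U' star' bp gam t t' -> phtpy setT (tensor_map t) (tensor_map t').
Proof.
move=> [vt [vt' [[ez [gg' bb']] | [z [g [b [d [hd et et']]]]]]]]; last first.
  subst t t'; case: vt vt' => [/= _ hb] [/= hg _].
  rewrite /tensor_map /conjW /= !comp_pcat comp_invpath.
  exact: phtpy_pcat_conj_move (path_in_f f_cont hg) (path_in_fgam z) (path_in_f f_cont hd)
    (path_in_setT hb) (path_inv gstar_path).
case: t t' vt vt' ez gg' bb' => z [g b] [_ [g' b']] [/= hg hb] [/= hg' _] /= <- gg' bb'.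
have hfb := path_in_setT hb; have hr := path_in_tensor_map_tail hb.
apply: phtpy_trans (phtpy_pcatr (path_in_f f_cont hg) hr (phtpy_map f_cont _ gg')) _ => //.
apply: phtpy_pcatl (path_in_f f_cont hg') hr _.
apply: phtpy_pcatr (path_pcat (path_in_fgam z) hfb) (path_inv gstar_path) _.
exact: phtpy_pcatl (path_in_fgam z) hfb (phtpy_subset (@subsetT _ U') bb').
Qed.

Lemma tensor_map_well_defined t t' :
  valid t -> teq t t' -> phtpy setT (tensor_map t) (tensor_map t').
Proof.
apply: (@clos_rst_equiv_in _ _ (tensor_gen f dag U' star' bp gam)
  (fun x y => phtpy setT (tensor_map x) (tensor_map y))) => [||x y|x y z].
- exact: tensor_gen_phtpy.
- by move=> x /path_in_tensor_map /phtpy_refl.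
- exact: phtpy_sym.
- exact: phtpy_trans.
Qed.

Lemma tensor_map_equivariantl h t : path_in setT h dag dag -> valid t ->
  phtpy setT (tensor_map (t.1, (pcat h t.2.1, t.2.2))) (pcat (f \o h) (tensor_map t)).
Proof.
case: t => z [g b] hh [/= hg hb]; rewrite /tensor_map /= comp_pcat.
exact: phtpy_pcatA (path_in_f f_cont hh) (path_in_f f_cont hg) (path_in_tensor_map_tail hb).
Qed.

Lemma tensor_map_equivariantr e t : path_in U' e star' star' -> valid t ->
  phtpy setT (tensor_map (t.1, (t.2.1, pcat t.2.2 e)))
    (pcat (tensor_map t) (pcat (pcat gstar e) (invpath gstar))).
Proof.
case: t => z [g b] he [/= hg hb].
exact: phtpy_pcat_conjr (path_in_f f_cont hg) (path_in_fgam z) (path_in_setT hb)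
  (path_in_setT he) gstar_path.
Qed.

Lemma tensor_map_surjective p : path_in setT p (f dag) star ->
  exists t, valid t /\ phtpy setT (tensor_map t) p.
Proof.
move=> hp.
have [lam [w [hlam fw flam]]] := fibrant_lift_path f_fib (path_pcat hp gstar_path).
have wU : (f @^-1` U') w by rewrite /= fw.
have [z [[e he] _]] := bp_comp wU.
have hfe := path_in_f_preimage f_cont he; rewrite fw in hfe.
have hfl := path_in_f f_cont hlam; rewrite fw in hfl.
exists (z, (pcat (pcat lam (invpath e)) (invpath (gam z)), f \o e)); split.
  split => //=; apply: path_pcat (path_inv (gam_path z)).
  exact: path_pcat (path_in_setT hlam) (path_inv (path_in_setT he)).
rewrite /tensor_map /= !comp_pcat !comp_invpath.
apply: phtpy_trans (phtpy_pcat_telescope hfl (path_in_setT hfe) (path_in_fgam z)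
  gstar_path) _.
apply: phtpy_trans (phtpy_pcatr hfl (path_inv gstar_path) (phtpy_eq_in hfl flam)) _.
exact: phtpy_pcatK hp gstar_path.
Qed.

Lemma path_in_tensor_core z g b : path_in setT g dag dag -> path_in U' b (f (bp z)) star' ->
  path_in setT (pcat (pcat (f \o g) (f \o gam z)) b) (f dag) star'.
Proof.
move=> hg hb.
exact: path_pcat (path_pcat (path_in_f f_cont hg) (path_in_fgam z)) (path_in_setT hb).
Qed.

Lemma tensor_map_pcatIr t t' : valid t -> valid t' ->
  phtpy setT (tensor_map t) (tensor_map t') ->
  phtpy setT (pcat (pcat (f \o t.2.1) (f \o gam t.1)) t.2.2)
             (pcat (pcat (f \o t'.2.1) (f \o gam t'.1)) t'.2.2).
Proof.
have reassoc z g b : path_in setT g dag dag -> path_in U' b (f (bp z)) star' ->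
    phtpy setT (tensor_map (z, (g, b)))
      (pcat (pcat (pcat (f \o g) (f \o gam z)) b) (invpath gstar)).
  move=> hg hb; have [hfg hfb] := (path_in_f f_cont hg, path_in_setT hb).
  apply: phtpy_trans (phtpy_sym (phtpy_pcatA hfg (path_pcat (path_in_fgam z) hfb)
    (path_inv gstar_path))) _.
  apply: phtpy_pcatr (path_pcat hfg (path_pcat (path_in_fgam z) hfb))
    (path_inv gstar_path) _.
  exact: phtpy_sym (phtpy_pcatA hfg (path_in_fgam z) hfb).
case: t t' => z [g b] [z' [g' b']] [/= hg hb] [/= hg' hb'] h.
apply: (phtpy_pcatIr (path_in_tensor_core hg hb) (path_in_tensor_core hg' hb') gstar_path).
apply: phtpy_trans (phtpy_sym (reassoc _ _ _ hg hb)) _.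
exact: phtpy_trans h (reassoc _ _ _ hg' hb').
Qed.

Lemma component_unique z z' w :
  pconn (f @^-1` U') (bp z) w -> pconn (f @^-1` U') (bp z') w -> z = z'.
Proof.
move=> zw z'w; have [p hp] := zw.
have wU : (f @^-1` U') w by case: hp => _ Up _ <-; apply: Up; exact: I01_1.
by have [z0 [_ uniq]] := bp_comp wU; rewrite -(uniq z zw) (uniq z' z'w).
Qed.

(* The chain of generating relations passes through g' conjW(delta) (x) b and
   g' (x) f(delta) b, where delta = bt' m bt^-1 is a loop in W'_z. *)
Lemma tensor_eq_of_lifts z g b g' b' bt bt' w w' m :
  path_in setT g dag dag -> path_in U' b (f (bp z)) star' ->
  path_in setT g' dag dag -> path_in U' b' (f (bp z)) star' ->
  path_in (f @^-1` U') bt (bp z) w -> (forall s, I01 s -> f (bt s) = b s) ->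
  path_in (f @^-1` U') bt' (bp z) w' -> (forall s, I01 s -> f (bt' s) = b' s) ->
  path_in [set x | f x = star'] m w' w ->
  phtpy setT (pcat (pcat g (gam z)) bt) (pcat (pcat (pcat g' (gam z)) bt') m) ->
  teq (z, (g, b)) (z, (g', b')).
Proof.
move=> hg hb hg' hb' hbt fbt hbt' fbt' hm h.
have fw : f w = star' by case: hm => _ Fm _ <-; exact: Fm I01_1.
have fw' : f w' = star' by case: hm => _ Fm <- _; exact: Fm I01_0.
have hmU : path_in (f @^-1` U') m w' w by apply: path_subset hm => x /= ->.
pose delta := pcat (pcat bt' m) (invpath bt).
have hdU : path_in (f @^-1` U') delta (bp z) (bp z).
  exact: path_pcat (path_pcat hbt' hmU) (path_inv hbt).
have hd := path_restrict hdU (fun s hs => pconn_path_point hdU hs).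
have hfd := path_in_f_preimage f_cont hdU.
apply: (rst_trans _ _ _ (z, (pcat g' (conjW gam z delta), b))).
  apply: rst_step.
  split; first by split.
  split; first split => //=.
    exact: path_pcat hg' (path_pcat (path_pcat (gam_path z) (path_in_setT hdU))
      (path_inv (gam_path z))).
  left; split => //; split => /=; last exact: phtpy_refl hb.
  exact: phtpy_pcat_solve_conj hg (gam_path z) (path_in_setT hbt) hg'
    (path_in_setT hbt') (path_in_setT hm) h.
apply: (rst_trans _ _ _ (z, (g', pcat (f \o delta) b))).
  apply: rst_step.
  split; first split => //=.
    exact: path_pcat hg' (path_pcat (path_pcat (gam_path z) (path_in_setT hdU))
      (path_inv (gam_path z))).
  split; first by split => //=; exact: path_pcat hfd hb.
  by right; exists z, g', b, delta.
apply: rst_step; split; first by split => //=; exact: path_pcat hfd hb.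
split; first by split.
left; split => //; split => /=; first exact: phtpy_refl hg'.
have fbt_U := path_in_f_preimage f_cont hbt.
have fbt'_U := path_in_f_preimage f_cont hbt'.
have fm_U := path_in_f_preimage f_cont hmU.
rewrite fw in fbt_U; rewrite fw' in fbt'_U; rewrite fw fw' in fm_U.
rewrite /delta !comp_pcat comp_invpath.
apply: (phtpy_pcat_replace fbt'_U fm_U fbt_U hb' hb).
- exact: phtpy_eq_in fbt'_U fbt'.
- by apply: (phtpy_eq_in fm_U) => s hs /=; case: hm => _ ->.
- exact: phtpy_eq_in fbt_U fbt.
Qed.

Lemma tensor_map_injective t t' : valid t -> valid t' ->
  phtpy setT (tensor_map t) (tensor_map t') -> teq t t'.
Proof.
move=> vt vt' /(tensor_map_pcatIr vt vt').
case: t t' vt vt' => z [g b] [z' [g' b']] [/= hg hb] [/= hg' hb'] hcore.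
have [bt [w [hbt fw fbt]]] := fibrant_lift_path f_fib hb.
have [bt' [w' [hbt' fw' fbt']]] := fibrant_lift_path f_fib hb'.
have hP := path_pcat (path_pcat hg (gam_path z)) (path_in_setT hbt).
have hP' := path_pcat (path_pcat hg' (gam_path z')) (path_in_setT hbt').
have [|m [hm PP']] := fibrant_phtpy_lift f_fib f_cont hP hP'.
  rewrite !comp_pcat; apply: phtpy_eq_inl (phtpy_eq_inr hcore _) _.
    by apply: pcat_eq_in => // s hs /=; rewrite fbt'.
  by apply: pcat_eq_in => // s hs /=; rewrite fbt.
rewrite fw in hm.
have ez : z = z'.
  apply: (@component_unique _ _ w') => //; last by exists bt'.
  exists (pcat bt (invpath m)); apply: path_pcat hbt (path_inv _).
  by apply: path_subset hm => x /= ->.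
subst z'; exact: tensor_eq_of_lifts hg hb hg' hb' hbt fbt hbt' fbt' hm PP'.
Qed.

End TensorMap.

Theorem mainTheorem16
  (W U : topologicalType) (f : W -> U)
  (f_cont : continuous f) (f_fib : fibrant f)
  (W_pc : path_connected [set: W]) (U_pc : path_connected [set: U])
  (dag : W) (star : U)
  (U' : set U) (star' : U) (star'_in : U' star') (U'_pc : path_connected U')
  (I : Type) (bp : I -> W)
  (bp_in : forall z, (f @^-1` U') (bp z))
  (bp_comp : forall w, (f @^-1` U') w ->
      exists! z, pconn (f @^-1` U') (bp z) w)
  (gam : I -> R -> W) (gam_path : forall z, path_in setT (gam z) dag (bp z))
  (gstar : R -> U) (gstar_path : path_in setT gstar star star') :
  let Phi := fun t : I * ((R -> W) * (R -> U)) =>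
    pcat (f \o t.2.1) (pcat (pcat (f \o gam t.1) t.2.2) (invpath gstar)) in
  let valid := tvalid f dag U' star' bp in
  let teq := tensor_eq f dag U' star' bp gam in
  (* well defined *)
  (forall t t', valid t -> valid t' -> teq t t' -> phtpy setT (Phi t) (Phi t')) /\
  (* injective *)
  (forall t t', valid t -> valid t' -> phtpy setT (Phi t) (Phi t') -> teq t t') /\
  (* surjective *)
  (forall p, path_in setT p (f dag) star -> exists t, valid t /\ phtpy setT (Phi t) p) /\
  (* left pi_1(W,dag)-equivariance *)
  (forall h t, path_in setT h dag dag -> valid t ->
     phtpy setT (Phi (t.1, (pcat h t.2.1, t.2.2))) (pcat (f \o h) (Phi t))) /\
  (* right pi_1(U',star')-equivariance, acting on B(f,dag,star) via ()^- *)
  (forall e t, path_in U' e star' star' -> valid t ->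
     phtpy setT (Phi (t.1, (t.2.1, pcat t.2.2 e))) (pcat (Phi t) (pcat (pcat gstar e) (invpath gstar)))).
Proof.
move=> Phi valid teq; split; last split; last split; last split.
- move=> t t' vt _; exact: (tensor_map_well_defined f_cont gam_path gstar_path vt).
- exact: (tensor_map_injective f_cont f_fib bp_comp gam_path gstar_path star'_in).
- exact: (tensor_map_surjective f_cont f_fib bp_comp gam_path gstar_path star'_in).
- exact: (tensor_map_equivariantl f_cont gam_path gstar_path).
- exact: (tensor_map_equivariantr f_cont gam_path gstar_path).
Qed.
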